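(* Let $\Delta$ be a $k$-shellable simplicial complex and $\sigma$ a face of $\Delta$. Then $\operatorname{lk}_\Delta(\sigma)$ is $k$-shellable.
   Context: $\operatorname{lk}_\Delta(\sigma)=\{G\in\Delta: G\cap\sigma=\emptyset,\ G\cup\sigma\in\Delta\}$. $\langle F_1,\ldots,F_s\rangle$ denotes the simplicial complex with facets $F_1,\dots,F_s$. A simplicial complex $\Gamma$ of dimension $d$ is $k$-shellable ($1\le k\le d+1$) if its facets can be ordered $F_1,\ldots,F_r$ such that for every $j=2,\ldots,r$, $\Gamma_j=\langle F_j\rangle\cap\langle F_1,\ldots,F_{j-1}\rangle$ satisfies (i) $\Gamma_j$ is generated by a nonempty set of faces of $\langle F_j\rangle$ of dimension $|F_j|-k-1$; (ii) if $\Gamma_j$ has more than one facet, then for every two distinct facets $\sigma',\tau'$ of $\Gamma_j$, $F_j\subseteq\sigma'\cup\tau'$. *)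

From mathcomp Require Import all_boot.
Set Implicit Arguments. Unset Strict Implicit. Unset Printing Implicit Defensive.

Section SC.
Variable T : finType.

Definition is_complex (D : {set {set T}}) : Prop :=
  forall F G : {set T}, F \in D -> G \subset F -> G \in D.

Definition facets (D : {set {set T}}) : {set {set T}} :=
  [set F in D | [forall G in D, (F \subset G) ==> (G == F)]].

Definition gen (S : {set {set T}}) : {set {set T}} :=
  [set G : {set T} | [exists H in S, G \subset H]].

Definition link (D : {set {set T}}) (sigma : {set T}) : {set {set T}} :=
  [set G in D | [disjoint G & sigma] && (G :|: sigma \in D)].

(* k-shellability (the range restriction k <= d+1 is not imposed).
   The facet ordering F_1,...,F_r is the duplicate-free list s of all facets;
   F_j is (nth set0 s j) with 0-based j, so "j = 2..r" is "0 < j < size s". *)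
Definition k_shellable (D : {set {set T}}) (k : nat) : Prop :=
  1 <= k /\
  exists s : seq {set T},
    uniq s /\ (forall F, (F \in s) = (F \in facets D)) /\
    forall j, 0 < j < size s ->
      let Fj := nth set0 s j in
      let Gam := gen [set Fj] :&: gen [set F in take j s] in
      (exists S : {set {set T}},
          S != set0 /\ S \subset powerset Fj /\
          (forall H, H \in S -> #|H| + k = #|Fj|) /\ Gam = gen S) /\
      (1 < #|facets Gam| ->
         forall a b, a \in facets Gam -> b \in facets Gam -> a != b ->
           Fj \subset a :|: b).
End SC.

From mathcomp Require Import all_boot zify.
Set Implicit Arguments. Unset Strict Implicit. Unset Printing Implicit Defensive.

(* The facets of lk(sigma) are the sets F \ sigma for the facets F containing
   sigma, and G |-> G :|: sigma identifies the link with the faces containing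
   sigma.  Hence a k-shelling of D, restricted to the facets containing sigma,
   k-shells the link: for such a facet F, the overlap of <F \ sigma> with the
   earlier facets of the link is the link of sigma in the overlap Gam of <F>
   with the earlier facets of D.  Both shelling conditions pass from Gam to its
   link: a generator H of Gam of codimension k in F yields the generator
   H \ sigma of codimension k in F \ sigma, and F \subset a :|: b yields
   F \ sigma \subset (a \ sigma) :|: (b \ sigma). *)

Lemma map_filter_eq_cat_cons (T U : Type) (f : T -> U) (P : pred T) s p' y q' :
  map f (filter P s) = p' ++ y :: q' ->
  exists p x q, [/\ s = p ++ x :: q, P x, f x = y & map f (filter P p) = p'].
Proof.
elim: s p' => [|a s IHs] p' /=; first by case: p'.
case Pa: (P a) => /=; last first.
  by move=> /IHs[p [x [q [-> Px fx <-]]]]; exists (a :: p), x, q; rewrite /= Pa.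
case: p' => [|b p'] [fa e]; first by exists [::], a, s.
have [p [x [q [-> Px fx <-]]]] := IHs _ e.
by exists (a :: p), x, q; rewrite /= Pa /= fa.
Qed.

Section LinkShelling.
Variable T : finType.
Implicit Types (C S P Gam : {set {set T}}) (A B F G H sigma : {set T}).

Lemma setDUK A B : B \subset A -> (A :\: B) :|: B = A.
Proof. by move/setIidPr=> sBA; rewrite setUC -{2}(setID A B) sBA. Qed.

Lemma setUDK A B : [disjoint A & B] -> (A :|: B) :\: B = A.
Proof. by move/setDidPl=> dAB; rewrite setDUl setDv setU0. Qed.

Lemma subsetD_setU G F sigma : sigma \subset F ->
  (G \subset F :\: sigma) = [disjoint G & sigma] && (G :|: sigma \subset F).
Proof. by move=> sF; rewrite subsetD subUset sF andbT andbC. Qed.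

Lemma disjointDl A B : [disjoint A :\: B & B].
Proof. by have := subxx (A :\: B); rewrite subsetD => /andP[]. Qed.

Lemma facetsP C F :
  reflect (F \in C /\ forall G, G \in C -> F \subset G -> G = F) (F \in facets C).
Proof.
rewrite inE; apply: (iffP andP) => [[FC /forall_inP maxF]|[FC maxF]].
  by split=> // G GC sFG; apply/eqP; exact: implyP (maxF G GC) sFG.
by split=> //; apply/forall_inP => G GC; apply/implyP => /(maxF G GC)->.
Qed.

Lemma in_gen S G : (G \in gen S) = [exists H in S, G \subset H].
Proof. by rewrite inE. Qed.

Lemma in_gen1 F G : (G \in gen [set F]) = (G \subset F).
Proof.
rewrite in_gen; apply/exists_inP/idP => [[H /set1P-> //]|sGF].
by exists F; rewrite ?set11.
Qed.

Lemma gen_complex S : is_complex (gen S).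
Proof.
move=> F G; rewrite !in_gen => /exists_inP[H HS sFH] sGF.
by apply/exists_inP; exists H; last exact: subset_trans sFH.
Qed.

Lemma complexI C1 C2 : is_complex C1 -> is_complex C2 -> is_complex (C1 :&: C2).
Proof.
move=> cC1 cC2 F G /setIP[FC1 FC2] sGF.
by rewrite inE (cC1 F G) ?(cC2 F G).
Qed.

Lemma set0_in_gen S : (set0 \in gen S) = (S != set0).
Proof.
rewrite in_gen; apply/exists_inP/set0Pn => [[H HS _]|[H HS]]; first by exists H.
by exists H; rewrite ?sub0set.
Qed.

Lemma in_link C sigma G :
  (G \in link C sigma) = [&& G \in C, [disjoint G & sigma] & G :|: sigma \in C].
Proof. by rewrite inE. Qed.

Lemma link_setI C1 C2 sigma :
  link (C1 :&: C2) sigma = link C1 sigma :&: link C2 sigma.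
Proof.
apply/setP => G; rewrite !(in_setI, in_link).
by case: (G \in C1) (G \in C2) [disjoint G & sigma] (G :|: sigma \in C1)
  (G :|: sigma \in C2) => [] [] [] [] [].
Qed.

Definition link_facets S sigma := [set H :\: sigma | H in S & sigma \subset H].

Lemma link_facetsP S sigma G :
  reflect (exists2 H, (H \in S) && (sigma \subset H) & G = H :\: sigma)
          (G \in link_facets S sigma).
Proof.
by apply: (iffP imsetP) => -[H HS ->]; exists H; rewrite // inE in HS *.
Qed.

Lemma link_facets1 F sigma :
  sigma \subset F -> link_facets [set F] sigma = [set F :\: sigma].
Proof.
move=> sF; apply/setP => G; rewrite inE.
apply/link_facetsP/eqP => [[H /andP[/set1P-> _] ->] //|->].
by exists F; rewrite ?set11.
Qed.

Lemma card_link_facets S sigma : #|link_facets S sigma| <= #|S|.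
Proof.
apply: leq_trans (leq_imset_card _ _) (subset_leq_card _).
by apply/subsetP => H; rewrite inE => /andP[].
Qed.

Lemma link_gen S sigma : link (gen S) sigma = gen (link_facets S sigma).
Proof.
apply/setP => G; rewrite in_link !in_gen.
apply/and3P/exists_inP => [[_ dG /exists_inP[H HS sGH]]|].
  have sH : sigma \subset H by rewrite (subset_trans (subsetUr G sigma)).
  exists (H :\: sigma); first by apply/link_facetsP; exists H; rewrite ?HS.
  by rewrite subsetD_setU // dG.
move=> [_ /link_facetsP[H /andP[HS sH] ->]].
rewrite subsetD_setU // => /andP[dG sGH].
split=> //; apply/exists_inP; exists H => //.
exact: subset_trans (subsetUl G sigma) sGH.
Qed.

Lemma facets_link C sigma :
  is_complex C -> facets (link C sigma) = link_facets (facets C) sigma.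
Proof.
move=> cC.
have setD_in_link H : H \in C -> sigma \subset H -> H :\: sigma \in link C sigma.
  by move=> HC sH; rewrite in_link (cC H) ?subsetDl // disjointDl setDUK.
apply/setP => G; apply/facetsP/link_facetsP.
  case; rewrite in_link => /and3P[GC dG GsC] maxG.
  exists (G :|: sigma); last by rewrite setUDK.
  rewrite subsetUr andbT; apply/facetsP; split=> // H HC sGH.
  have sH : sigma \subset H by rewrite (subset_trans (subsetUr G sigma)).
  rewrite -(setDUK sH) (maxG (H :\: sigma)) ?setD_in_link //.
  by rewrite subsetD_setU // dG.
case=> F /andP[/facetsP[FC maxF] sF] ->; split; first exact: setD_in_link.
move=> H; rewrite in_link => /and3P[_ dH HsC] sFH.
rewrite -(setUDK dH) (maxF (H :|: sigma)) //.
by rewrite -(setDUK sF) setSU.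
Qed.

Lemma cardsD_eq k F H sigma : sigma \subset H -> sigma \subset F ->
  #|H| + k = #|F| -> #|H :\: sigma| + k = #|F :\: sigma|.
Proof. by move=> sH sF; rewrite !cardsDS //; have := subset_leq_card sH; lia. Qed.

Definition overlap F P := gen [set F] :&: gen P.

Definition codim_generated k F Gam :=
  exists S : {set {set T}},
    S != set0 /\ S \subset powerset F /\
    (forall H, H \in S -> #|H| + k = #|F|) /\ Gam = gen S.

Definition facets_cover F Gam :=
  1 < #|facets Gam| ->
  forall a b, a \in facets Gam -> b \in facets Gam -> a != b -> F \subset a :|: b.

Definition shelling_step k F P :=
  codim_generated k F (overlap F P) /\ facets_cover F (overlap F P).

Lemma codim_generated_link k F Gam sigma : sigma \subset F -> sigma \in Gam ->
  codim_generated k F Gam -> codim_generated k (F :\: sigma) (link Gam sigma).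
Proof.
move=> sF sGam [S [S0 [SF [cardS defGam]]]]; rewrite defGam in sGam *.
exists (link_facets S sigma); rewrite link_gen; do !split.
- rewrite -set0_in_gen -link_gen in_link set0U sGam andbT.
  by rewrite (gen_complex sGam (sub0set sigma)) -setI_eq0 set0I eqxx.
- apply/subsetP => _ /link_facetsP[H /andP[HS sH] ->].
  by rewrite powersetE setSD // -powersetE (subsetP SF).
- by move=> _ /link_facetsP[H /andP[HS sH] ->]; apply: cardsD_eq => //; apply: cardS.
Qed.

Lemma facets_cover_link F Gam sigma : is_complex Gam ->
  facets_cover F Gam -> facets_cover (F :\: sigma) (link Gam sigma).
Proof.
move=> cGam cover; rewrite /facets_cover facets_link // => many a' b'.
move=> /link_facetsP[a /andP[fa _] ->] /link_facetsP[b /andP[fb _] ->] neq.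
rewrite -setDUl setSD // cover //; first exact: leq_trans many (card_link_facets _ _).
by apply: contraNneq neq => ->.
Qed.

Lemma overlap_link F P sigma : sigma \subset F ->
  overlap (F :\: sigma) (link_facets P sigma) = link (overlap F P) sigma.
Proof. by move=> sF; rewrite /overlap link_setI !link_gen link_facets1. Qed.

Lemma shelling_step_link k F P sigma :
  sigma \subset F -> (exists2 H, H \in P & sigma \subset H) ->
  shelling_step k F P -> shelling_step k (F :\: sigma) (link_facets P sigma).
Proof.
move=> sF [H HP sH] [codim cover]; rewrite /shelling_step overlap_link //.
have sO : sigma \in overlap F P.
  by rewrite inE in_gen1 sF in_gen; apply/exists_inP; exists H.
split; first exact: codim_generated_link.
by apply: facets_cover_link => //; apply: complexI; apply: gen_complex.
Qed.

Definition link_order (s : seq {set T}) sigma :=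
  [seq F :\: sigma | F <- s & sigma \subset F].

Lemma mem_link_order s sigma :
  link_order s sigma =i link_facets [set F in s] sigma.
Proof.
move=> G; apply/mapP/link_facetsP => -[F].
  by rewrite mem_filter => /andP[sF Fs] ->; exists F; rewrite ?inE ?Fs.
by rewrite inE => /andP[Fs sF] ->; exists F; rewrite ?mem_filter ?sF.
Qed.

Lemma link_order_uniq s sigma : uniq s -> uniq (link_order s sigma).
Proof.
move=> us; rewrite map_inj_in_uniq ?filter_uniq // => A B.
by rewrite !mem_filter => /andP[sA _] /andP[sB _] eAB; rewrite -(setDUK sA) eAB setDUK.
Qed.

Definition shelling_order k (s : seq {set T}) :=
  forall p F q, s = p ++ F :: q -> p != [::] -> shelling_step k F [set G in p].

Lemma shelling_order_link k s sigma :
  shelling_order k s -> shelling_order k (link_order s sigma).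
Proof.
move=> ord p' F' q' /(map_filter_eq_cat_cons (f := fun F => F :\: sigma)).
case=> p [F [q [def_s sF <- <-]]] p'_nil.
have [H Hp sH] : exists2 H, H \in p & sigma \subset H.
  apply/hasP; move: p'_nil; rewrite -size_eq0 size_map size_filter.
  by rewrite -lt0n -has_count.
have -> : [set G in link_order p sigma] = link_facets [set G in p] sigma.
  by apply/setP => G; rewrite inE mem_link_order.
apply: shelling_step_link => //; first by exists H; rewrite ?inE.
by apply: ord def_s _; apply: contraTneq Hp => ->.
Qed.

Lemma k_shellableE D k : k_shellable D k <->
  1 <= k /\ exists s, [/\ uniq s, s =i facets D & shelling_order k s].
Proof.
split=> -[k1 [s hs]]; split=> //; exists s; move: hs.
  case=> us [sD steps]; split=> // p F q def_s p_nil.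
  have := steps (size p); rewrite def_s size_cat nth_cat ltnn subnn take_size_cat //.
  by apply; rewrite lt0n size_eq0 p_nil /= -addSnnS leq_addr.
case=> us sD ord; do 2!split=> //; move=> j /andP[j0 js].
apply: (ord (take j s) _ (drop j.+1 s)); first by rewrite -drop_nth // cat_take_drop.
by rewrite -size_eq0 size_take js -lt0n.
Qed.

End LinkShelling.

Theorem theorem2p6 (T : finType) (D : {set {set T}}) (k : nat) (sigma : {set T}) :
  is_complex D -> k_shellable D k -> sigma \in D ->
  k_shellable (link D sigma) k.
Proof.
move=> cD /k_shellableE[k1 [s [us sD ord]]] _; apply/k_shellableE; split=> //.
exists (link_order s sigma).
split; [exact: link_order_uniq | | exact: shelling_order_link].
move=> G; rewrite mem_link_order facets_link //.
by congr (G \in link_facets _ sigma); apply/setP => F; rewrite inE sD.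
Qed.
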